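(* The DS matching and pricing scheme described in the context is individually rational: $q_d\ge P_d(b_d)$ for every matched driver $d\in\mathcal{D}^*$ and $q_r\le P_r(\delta_r)$ for every matched rider $r\in\mathcal{R}^*$.
   Context: One decision epoch with finite sets $\mathcal{D}$ (drivers) and $\mathcal{R}$ (riders). Rider $r$ requests a trip of shortest-route length $h_r$ with destination $t_r$; $\tau_{dr}\ge0$ is the pick-up distance from driver $d$ to rider $r$, $\tau_d^{\min}=\min_{r}\tau_{dr}$, $\tau_r^{\min}=\min_d\tau_{dr}$. Public constants $\alpha,\beta>0$, and $f(t_r)$ is a given opportunity cost depending on the destination. Driver $d$ reports a bid $b_d$ and rider $r$ a bid $\delta_r$. For a potential match $(d,r)$ the valuations are $P_d(b_d)=\alpha h_r+b_d(\tau_{dr}-\tau_d^{\min})+f(t_r)$ and $P_r(\delta_r)=\beta h_r-\delta_r(\tau_{dr}-\tau_r^{\min})$, and the social welfare is $\sigma_{dr}=P_r-P_d$. Each potential match has a sensing gain $\zeta_{dr}\ge0$ not depending on bids. DS matching problem: maximize $\sum_{r,d}\zeta_{dr}x_{dr}$ subject to $\sum_r x_{dr}\le1$ $\forall d$, $\sum_d x_{dr}\le 1$ $\forall r$, $\sum_{r,d}\sigma_{dr}x_{dr}\ge0$, $x_{dr}\in\{0,1\}$; let $x^*$ be an optimal solution with value $U^*$, $\mathcal{D}^*,\mathcal{R}^*$ the sets of matched drivers and riders, and $V=\sum_{r,d}\sigma_{dr}x^*_{dr}$. For $d\in\mathcal{D}^*$ let $U^*_{d-}$ be the optimal value of the same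 problem with driver $d$ removed and $\Delta U_d=U^*-U^*_{d-}$; analogously $\Delta U_r=U^*-U^*_{r-}$ for $r\in\mathcal{R}^*$. Shares: $\lambda_d=\Delta U_d/(\sum_{d'\in\mathcal{D}^*}\Delta U_{d'}+\sum_{r'\in\mathcal{R}^*}\Delta U_{r'})$ and $\lambda_r=\Delta U_r/(\text{same denominator})$ (the denominator is taken to be nonzero so the shares are defined). Bonuses $\rho_d=V\lambda_d$, $\rho_r=V\lambda_r$. For a matched pair $(d,r)$, the platform pays driver $d$ the amount $q_d=P_d+\rho_d$ and charges rider $r$ the amount $q_r=P_r-\rho_r$. *)

From mathcomp Require Import all_boot all_order all_algebra.
Set Implicit Arguments. Unset Strict Implicit. Unset Printing Implicit Defensive.
Import Order.TTheory GRing.Theory Num.Theory.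
Local Open Scope ring_scope.

Section DSScheme.
Variables (R : realFieldType) (Drv Rdr : finType) (Dest : Type).
Variables (alpha beta : R) (h : Rdr -> R) (tdest : Rdr -> Dest) (f : Dest -> R)
          (tau : Drv -> Rdr -> R).
Variables (b : Drv -> R) (delta : Rdr -> R).
Variable (zeta : Drv -> Rdr -> R).

(* tau_d^min = min_{r'} tau d r' ; the big-min is seeded with tau d r, which
   is itself one of the values, so the result is the true minimum. *)
Definition tau_min_d (d : Drv) (r : Rdr) : R :=
  \big[Num.min/tau d r]_(r' : Rdr) tau d r'.
Definition tau_min_r (d : Drv) (r : Rdr) : R :=
  \big[Num.min/tau d r]_(d' : Drv) tau d' r.

Definition Pd (d : Drv) (r : Rdr) : R :=
  alpha * h r + b d * (tau d r - tau_min_d d r) + f (tdest r).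
Definition Pr (d : Drv) (r : Rdr) : R :=
  beta * h r - delta r * (tau d r - tau_min_r d r).
Definition sigma (d : Drv) (r : Rdr) : R := Pr d r - Pd d r.

(* a 0/1 decision x is represented by the set X of pairs (d,r) with x_dr = 1 *)
Definition gain (X : {set Drv * Rdr}) : R := \sum_(p in X) zeta p.1 p.2.
Definition welfare (X : {set Drv * Rdr}) : R := \sum_(p in X) sigma p.1 p.2.

Definition feasible (X : {set Drv * Rdr}) : Prop :=
  [/\ (forall d r r', (d, r) \in X -> (d, r') \in X -> r = r'),
      (forall d d' r, (d, r) \in X -> (d', r) \in X -> d = d')
    & 0 <= welfare X].

Definition feasibleb (X : {set Drv * Rdr}) : bool :=
  [&& [forall d, forall r, forall r', ((d, r) \in X) && ((d, r') \in X) ==> (r == r')],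
      [forall d, forall d', forall r, ((d, r) \in X) && ((d', r) \in X) ==> (d == d')]
    & 0 <= welfare X].

(* optimal value of the DS problem restricted to matchings satisfying P.
   The empty matching is always feasible with gain 0 (and gains are >= 0), so
   seeding the max with 0 gives the true optimum. *)
Definition opt_value (P : pred {set Drv * Rdr}) : R :=
  \big[Num.max/0]_(X : {set Drv * Rdr} | feasibleb X && P X) gain X.

Definition is_optimal (X : {set Drv * Rdr}) : Prop :=
  feasible X /\ forall Y, feasible Y -> gain Y <= gain X.

Section Pricing.
Variable Xs : {set Drv * Rdr}.

Definition matchedD : {set Drv} := [set d | [exists r, (d, r) \in Xs]].
Definition matchedR : {set Rdr} := [set r | [exists d, (d, r) \in Xs]].

Definition Ustar : R := gain Xs.
Definition V : R := welfare Xs.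

Definition U_minus_d (d : Drv) : R :=
  opt_value (fun Y => [forall r, (d, r) \notin Y]).
Definition U_minus_r (r : Rdr) : R :=
  opt_value (fun Y => [forall d, (d, r) \notin Y]).

Definition dU_d (d : Drv) : R := Ustar - U_minus_d d.
Definition dU_r (r : Rdr) : R := Ustar - U_minus_r r.

Definition denom : R :=
  \sum_(d in matchedD) dU_d d + \sum_(r in matchedR) dU_r r.

Definition lambda_d (d : Drv) : R := dU_d d / denom.
Definition lambda_r (r : Rdr) : R := dU_r r / denom.

Definition rho_d (d : Drv) : R := V * lambda_d d.
Definition rho_r (r : Rdr) : R := V * lambda_r r.

Definition q_d (d : Drv) (r : Rdr) : R := Pd d r + rho_d d.
Definition q_r (d : Drv) (r : Rdr) : R := Pr d r - rho_r r.
End Pricing.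
End DSScheme.

From mathcomp Require Import all_boot all_order all_algebra.
Import Order.TTheory GRing.Theory Num.Theory.
Local Open Scope ring_scope.

(* Every matching admissible in a restricted problem (driver or rider removed)
   is admissible in the full one, so U^*_{d-}, U^*_{r-} <= U^* and all the
   marginal contributions, hence the shares, are nonnegative.  Since the optimal
   matching is feasible, V >= 0, so both bonuses are nonnegative: the driver is
   paid at least P_d and the rider charged at most P_r. *)

Section IndividualRationality.
Variables (R : realFieldType) (Drv Rdr : finType) (Dest : Type).
Variables (alpha beta : R) (h : Rdr -> R) (tdest : Rdr -> Dest) (f : Dest -> R)
          (tau : Drv -> Rdr -> R) (b : Drv -> R) (delta : Rdr -> R)
          (zeta : Drv -> Rdr -> R).

Let feasible := feasible alpha beta h tdest f tau b delta.
Let feasibleb := feasibleb alpha beta h tdest f tau b delta.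
Let opt_value := opt_value alpha beta h tdest f tau b delta zeta.

Lemma feasiblebP (X : {set Drv * Rdr}) : feasibleb X -> feasible X.
Proof.
move=> /and3P[/forallP uniqR /forallP uniqD welfare_ge0]; split=> //.
- move=> d r r' dr dr'; move: (uniqR d) => /forallP /(_ r) /forallP /(_ r').
  by rewrite dr dr' => /eqP.
- move=> d d' r dr d'r; move: (uniqD d) => /forallP /(_ d') /forallP /(_ r).
  by rewrite dr d'r => /eqP.
Qed.

Lemma opt_value_le (P : pred {set Drv * Rdr}) (U : R) :
  0 <= U -> (forall Y, feasible Y -> gain zeta Y <= U) -> opt_value P <= U.
Proof.
move=> U_ge0 gainY_le; apply: (big_ind (fun x => x <= U)) => //.
  by move=> x y; rewrite ge_max => -> ->.
by move=> Y /andP[/feasiblebP feasY _]; exact: gainY_le.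
Qed.

Variable Xs : {set Drv * Rdr}.
Hypothesis zeta_ge0 : forall d r, 0 <= zeta d r.
Hypothesis Xs_opt : is_optimal alpha beta h tdest f tau b delta zeta Xs.

Let dU_d := dU_d alpha beta h tdest f tau b delta zeta Xs.
Let dU_r := dU_r alpha beta h tdest f tau b delta zeta Xs.
Let denom := denom alpha beta h tdest f tau b delta zeta Xs.

Lemma opt_value_le_Ustar (P : pred {set Drv * Rdr}) : opt_value P <= Ustar zeta Xs.
Proof.
case: Xs_opt => _ Xs_max; apply: opt_value_le Xs_max.
by apply: sumr_ge0 => p _; exact: zeta_ge0.
Qed.

Lemma dU_d_ge0 (d : Drv) : 0 <= dU_d d.
Proof. by rewrite subr_ge0 opt_value_le_Ustar. Qed.

Lemma dU_r_ge0 (r : Rdr) : 0 <= dU_r r.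
Proof. by rewrite subr_ge0 opt_value_le_Ustar. Qed.

Lemma denom_ge0 : 0 <= denom.
Proof.
by apply: addr_ge0; apply: sumr_ge0 => *; [exact: dU_d_ge0 | exact: dU_r_ge0].
Qed.

Lemma V_ge0 : 0 <= V alpha beta h tdest f tau b delta Xs.
Proof. by case: Xs_opt => -[]. Qed.

Lemma rho_d_ge0 (d : Drv) : 0 <= rho_d alpha beta h tdest f tau b delta zeta Xs d.
Proof. by rewrite mulr_ge0 ?V_ge0 ?divr_ge0 ?dU_d_ge0 ?denom_ge0. Qed.

Lemma rho_r_ge0 (r : Rdr) : 0 <= rho_r alpha beta h tdest f tau b delta zeta Xs r.
Proof. by rewrite mulr_ge0 ?V_ge0 ?divr_ge0 ?dU_r_ge0 ?denom_ge0. Qed.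

End IndividualRationality.

Theorem proposition3 (R : realFieldType) (Drv Rdr : finType) (Dest : Type)
  (alpha beta : R) (h : Rdr -> R) (tdest : Rdr -> Dest) (f : Dest -> R)
  (tau : Drv -> Rdr -> R) (b : Drv -> R) (delta : Rdr -> R)
  (zeta : Drv -> Rdr -> R) (Xs : {set Drv * Rdr}) :
  0 < alpha -> 0 < beta ->
  (forall d r, 0 <= tau d r) ->
  (forall d r, 0 <= zeta d r) ->
  is_optimal alpha beta h tdest f tau b delta zeta Xs ->
  denom alpha beta h tdest f tau b delta zeta Xs != 0 ->
  forall d r, (d, r) \in Xs ->
    Pd alpha h tdest f tau b d r <= q_d alpha beta h tdest f tau b delta zeta Xs d r /\
    q_r alpha beta h tdest f tau b delta zeta Xs d r <= Pr beta h tau delta d r.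
Proof.
move=> _ _ _ zeta_ge0 Xs_opt _ d r _; split.
- by rewrite /q_d lerDl rho_d_ge0.
- by rewrite /q_r lerBlDr lerDl rho_r_ge0.
Qed.
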